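(* Let $z_1,z_2,z_3$ be three distinct complex numbers and let $w_1,w_2,w_3$ be three distinct complex numbers. Suppose that the 4-point sets $\{z_1,z_2,z_3,\infty\}$ and $\{w_1,w_2,w_3,\infty\}$ in the Riemann sphere $\widehat{\mathbb{C}}$ are Möbius equivalent, i.e. there is a Möbius transformation $\mu$ with $\mu(\{z_1,z_2,z_3,\infty\})=\{w_1,w_2,w_3,\infty\}$. Then there exists an affine transformation $T(z)=az+b$ with $a,b\in\mathbb{C}$, $a\neq 0$, such that $T(\{z_1,z_2,z_3\})=\{w_1,w_2,w_3\}$.
   Context: A Möbius transformation is a map $z\mapsto \frac{\alpha z+\beta}{\gamma z+\delta}$ of $\widehat{\mathbb{C}}=\mathbb{C}\cup\{\infty\}$ with $\alpha\delta-\beta\gamma\neq 0$. *)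

From HB Require Import structures.
From mathcomp Require Import all_boot all_order all_algebra.
From mathcomp Require Import complex.
From mathcomp Require Import reals.
Set Implicit Arguments. Unset Strict Implicit. Unset Printing Implicit Defensive.
Import Order.TTheory GRing.Theory Num.Theory.
Local Open Scope ring_scope.

(* The Riemann sphere: [Some z] is the finite point z, [None] is infinity. *)
Definition sphere (R : realType) := option R[i].

(* The Möbius transformation z |-> (a z + b)/(c z + d) acting on the sphere
   (the nondegeneracy condition a d - b c <> 0 is imposed separately). *)
Definition mobius (R : realType) (a b c d : R[i]) (p : sphere R) : sphere R :=
  match p with
  | Some z => if c * z + d == 0 then None else Some ((a * z + b) / (c * z + d))
  | None => if c == 0 then None else Some (a / c)
  end.

Definition pts_inf (R : realType) (z1 z2 z3 : R[i]) (p : sphere R) : Prop :=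
  p = Some z1 \/ p = Some z2 \/ p = Some z3 \/ p = None.

Definition pts3 (R : realType) (z1 z2 z3 : R[i]) (z : R[i]) : Prop :=
  z = z1 \/ z = z2 \/ z = z3.

(* Some point of {z1, z2, z3, oo} is sent to oo by the Mobius map mu.  If it is
   oo itself, mu is affine.  Otherwise it is some zi, and off zi the map reads
   mu z = mu oo + c / (z - zi); the affine map sending zi to mu oo with slope
   c / ((zj - zi)(zk - zi)) sends zj, zk to mu zk, mu zj, so both maps carry
   {z1, z2, z3} onto {w1, w2, w3}. *)
From HB Require Import structures.
From mathcomp Require Import all_boot all_order all_algebra.
From mathcomp Require Import complex.
From mathcomp Require Import reals.
From mathcomp Require Import ring.
Set Implicit Arguments. Unset Strict Implicit. Unset Printing Implicit Defensive.
Import Order.TTheory GRing.Theory Num.Theory.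
Local Open Scope ring_scope.

Lemma ex_in_map {T U : eqType} (f : T -> U) {P : T -> Prop} {s : seq T} {y : U} :
  (forall x, P x <-> x \in s) -> (exists x, P x /\ f x = y) <-> y \in map f s.
Proof.
move=> Ps; split=> [[x [/Ps xs <-]]|/mapP[x xs ->]]; first exact: map_f.
by exists x; split=> //; apply/Ps.
Qed.

Lemma pole_form (F : fieldType) (al be ga z0 z : F) :
  ga != 0 -> z != z0 ->
  (al * z + be) / (ga * (z - z0)) = al / ga + (al * z0 + be) / ga / (z - z0).
Proof. by move=> ga0 zz0; field; rewrite ga0 subr_eq0 zz0. Qed.

Section MobiusImage.
Variable R : realType.
Implicit Types (s t : seq R[i]) (al be ga de z : R[i]).

Definition add_inf s : seq (sphere R) := None :: map Some s.

Lemma mem_add_inf_Some s z : (Some z \in add_inf s) = (z \in s).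
Proof. by rewrite in_cons /= mem_map //; exact: Some_inj. Qed.

Lemma add_inf_eq_mem s t : add_inf s =i add_inf t -> s =i t.
Proof. by move=> st z; rewrite -!mem_add_inf_Some st. Qed.

Lemma perm_add_inf s t : perm_eq s t -> perm_eq (add_inf s) (add_inf t).
Proof. by rewrite perm_cons; exact: perm_map. Qed.

Lemma map_omap_add_inf (f : R[i] -> R[i]) s :
  map (omap f) (add_inf s) = add_inf (map f s).
Proof. by rewrite /add_inf /= -!map_comp. Qed.

Lemma pts3_mem z1 z2 z3 z : pts3 z1 z2 z3 z <-> z \in [:: z1; z2; z3].
Proof.
rewrite /pts3 !inE; split=> [[->|[->|->]]|/or3P[]/eqP->]; rewrite ?eqxx ?orbT //; tauto.
Qed.

Lemma pts_inf_mem z1 z2 z3 (p : sphere R) :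
  pts_inf z1 z2 z3 p <-> p \in add_inf [:: z1; z2; z3].
Proof.
rewrite /pts_inf !inE.
by split=> [[->|[->|[->|->]]]|/or4P[]/eqP->]; rewrite ?eqxx ?orbT //; tauto.
Qed.

Lemma mobius_affine al be de : de != 0 ->
  mobius al be 0 de =1 omap (fun z => al / de * z + be / de).
Proof.
move=> de0 [z|] /=; last by rewrite eqxx.
by rewrite mul0r add0r (negbTE de0) mulrDl mulrAC.
Qed.

Section Pole.
Variables (al be ga de z0 : R[i]).
Hypotheses (ga0 : ga != 0) (pole : ga * z0 + de = 0).

Let de_pole : de = - (ga * z0).
Proof. by apply/eqP; rewrite -addr_eq0 addrC pole. Qed.

Lemma det_pole : al * de - be * ga = - ga * (al * z0 + be).
Proof. by rewrite de_pole; ring. Qed.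

Lemma mobius_None_pole : mobius al be ga de None = Some (al / ga).
Proof. by rewrite /= (negbTE ga0). Qed.

Lemma mobius_Some_pole z : mobius al be ga de (Some z) =
  if z == z0 then None else Some (al / ga + (al * z0 + be) / ga / (z - z0)).
Proof.
rewrite /= de_pole -mulrBr mulf_eq0 (negbTE ga0) subr_eq0 /=.
by case: eqP => // /eqP zz0; rewrite pole_form.
Qed.

Lemma mobius_pole_image u v :
  al * z0 + be != 0 -> uniq [:: z0; u; v] ->
  exists a b : R[i], a != 0 /\
    map (mobius al be ga de) (add_inf [:: z0; u; v])
      =i add_inf (map (fun z => a * z + b) [:: z0; u; v]).
Proof.
move=> c0 uniq_zuv.
have [uz0 vz0 uv] : [/\ u != z0, v != z0 & u != v].
  by move: uniq_zuv; rewrite /= !inE negb_or ![z0 == _]eq_sym andbT -!andbA => /and3P[].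
set c := (al * z0 + be) / ga.
set a := c / ((u - z0) * (v - z0)).
have u0 : u - z0 != 0 by rewrite subr_eq0.
have v0 : v - z0 != 0 by rewrite subr_eq0.
exists a, (al / ga - a * z0); split.
  by rewrite !mulf_neq0 ?invr_neq0 ?mulf_neq0.
have Tz0 : a * z0 + (al / ga - a * z0) = al / ga by rewrite addrC subrK.
have Tu : a * u + (al / ga - a * z0) = al / ga + c / (v - z0).
  by rewrite /a; field; rewrite u0 v0 ga0.
have Tv : a * v + (al / ga - a * z0) = al / ga + c / (u - z0).
  by rewrite /a; field; rewrite u0 v0 ga0.
have -> : map (mobius al be ga de) (add_inf [:: z0; u; v]) =
  [:: mobius al be ga de None; mobius al be ga de (Some z0);
      mobius al be ga de (Some u); mobius al be ga de (Some v)] by [].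
rewrite mobius_None_pole !mobius_Some_pole eqxx (negbTE uz0) (negbTE vz0).
move=> q; rewrite /= Tz0 Tu Tv !inE orbCA; congr orb; congr orb; exact: orbC.
Qed.

End Pole.

Lemma mobius_image_affine al be ga de s :
  size s = 3 -> uniq s -> al * de - be * ga != 0 ->
  None \in map (mobius al be ga de) (add_inf s) ->
  exists a b : R[i], a != 0 /\
    map (mobius al be ga de) (add_inf s) =i add_inf (map (fun z => a * z + b) s).
Proof.
move=> s3 us det hit_inf.
have [ga0|ga0] := eqVneq ga 0.
  move: det; rewrite ga0 mulr0 subr0 mulf_eq0 negb_or => /andP[al0 de0].
  exists (al / de), (be / de); split; first by rewrite mulf_neq0 ?invr_neq0.
  by rewrite (eq_map (mobius_affine al be de0)) map_omap_add_inf.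
have [[z0|] z0s hit] := mapP hit_inf; last by rewrite mobius_None_pole in hit.
rewrite mem_add_inf_Some in z0s.
have pole : ga * z0 + de = 0 by move: hit => /=; case: eqP.
have c0 : al * z0 + be != 0.
  by move: det; rewrite (det_pole al be pole) mulNr oppr_eq0 mulf_eq0 negb_or => /andP[].
move: (perm_to_rem z0s) (size_rem z0s); rewrite s3.
case: (rem z0 s) => [|u [|v []]] // perm_s _.
have uniq_zuv : uniq [:: z0; u; v] by rewrite -(perm_uniq perm_s).
have [a [b [a0 img]]] := mobius_pole_image ga0 pole c0 uniq_zuv.
exists a, b; split=> // q.
rewrite (perm_mem (perm_map _ (perm_add_inf perm_s))) img.
by rewrite (perm_mem (perm_add_inf (perm_map _ perm_s))).
Qed.

End MobiusImage.

Theorem lemma1p2 (R : realType) (z1 z2 z3 w1 w2 w3 : R[i]) :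
  z1 != z2 -> z1 != z3 -> z2 != z3 ->
  w1 != w2 -> w1 != w3 -> w2 != w3 ->
  (exists alpha beta gamma delta : R[i],
      alpha * delta - beta * gamma != 0 /\
      forall q : sphere R,
        (exists p, pts_inf z1 z2 z3 p /\ mobius alpha beta gamma delta p = q)
        <-> pts_inf w1 w2 w3 q) ->
  exists a b : R[i], a != 0 /\
    forall w : R[i],
      (exists z, pts3 z1 z2 z3 z /\ a * z + b = w) <-> pts3 w1 w2 w3 w.
Proof.
move=> n12 n13 n23 _ _ _ [al [be [ga [de [det H]]]]].
have img : map (mobius al be ga de) (add_inf [:: z1; z2; z3]) =i add_inf [:: w1; w2; w3].
  move=> q; have := H q.
  rewrite (ex_in_map _ (pts_inf_mem z1 z2 z3)) pts_inf_mem.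
  by move=> Hq; apply/idP/idP => /Hq.
have uniq_z : uniq [:: z1; z2; z3] by rewrite /= !inE negb_or n12 n13 n23.
have hit_inf : None \in map (mobius al be ga de) (add_inf [:: z1; z2; z3]).
  by rewrite img in_cons eqxx.
have [a [b [a0 imgT]]] := mobius_image_affine (s := [:: z1; z2; z3]) erefl uniq_z det hit_inf.
have affine_img : map (fun z => a * z + b) [:: z1; z2; z3] =i [:: w1; w2; w3].
  by apply: add_inf_eq_mem => q; rewrite -imgT img.
exists a, b; split=> // w.
rewrite pts3_mem -affine_img.
exact (ex_in_map (fun z => a * z + b) (pts3_mem z1 z2 z3)).
Qed.
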